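(* Fix a time step $t$. Let $G$ be a class of real-valued functions on the representation space $\mathcal{R}$, let $\Phi$ be an invertible representation function, let the loss be the squared error $L(y,y')=(y-y')^2$, and suppose there is a constant $B_\Phi>0$ such that, for $\omega\in\{0,1\}$, the function $\mathbf{r}\mapsto \ell_{f,\Phi}(\Phi^{-1}(\mathbf{r}),\omega)/B_\Phi$ belongs to $G$. Then $$\epsilon_{PEHE_{t,g}}\le 2\big(R^{1}_{t,g}(f,\Phi)+R^{0}_{t,g}(f,\Phi)\big)+B_\Phi\,\mathrm{IPM}_G\big(g_\Phi(\cdot\mid W_t=1),g_\Phi(\cdot\mid W_t=0)\big)+C,$$ where $C$ is a constant independent of $f$ and $\Phi$. Moreover, if strict overlap holds, i.e. there is $\delta\in(0,1/2)$ with $\delta<e(\mathbf{h}_t)<1-\delta$ for all $\mathbf{h}_t$, then there exist constants $0<A_{t,g}\le B_{t,g}$ such that $$A_{t,g}\,\epsilon_{PEHE_{t,g}}\le \epsilon_{PEHE_t}\le B_{t,g}\,\epsilon_{PEHE_{t,g}}.$$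
   Context: Setting: time steps $t$, binary treatment $W_t\in\{0,1\}$, outcome $Y_t$, potential outcomes $Y_t(\omega)$, history $\mathbf{H}_t=[\mathbf{X}_{\le t},W_{<t},Y_{<t}]$, and a latent variable $\mathbf{Z}$ with inference distribution $q_\phi(\mathbf{Z}\mid\mathcal{D}_T)$. Propensity score $e(\mathbf{h}_t)=p(W_t=1\mid\mathbf{H}_t=\mathbf{h}_t)$. $\Phi:\mathcal{H}_t\to\mathcal{R}\subset\mathbb{R}^r$ is an invertible representation function; $f(\Phi(\mathbf{h}_t),\mathbf{z},\omega)$ is a hypothesis for the outcome. Pointwise risk: $\ell_{f,\Phi}(\mathbf{h}_t,\omega)=\mathbb{E}_{\mathbf{Z}\sim q_\phi}\mathbb{E}\big[L(Y_t(\omega),f(\Phi(\mathbf{h}_t),\mathbf{Z},\omega))\mid \mathbf{H}_t=\mathbf{h}_t,\mathbf{Z}\big]$. Weights: $\alpha(\mathbf{h}_t,\omega)\propto \dfrac{a(\mathbf{h}_t)}{\omega e(\mathbf{h}_t)+(1-\omega)(1-e(\mathbf{h}_t))}$ for a nonnegative tilting function $a$ (e.g. $a\equiv1$, $a=\min(e,1-e)$, $a=e(1-e)$), normalized so that $\int\alpha(\mathbf{h}_t,\omega)p(\mathbf{h}_t\mid W_t=\omega)\,d\mathbf{h}_t=1$. Target distributions: $g(\mathbf{h}_t\mid W_t=\omega)=\alpha(\mathbf{h}_t,\omega)p(\mathbf{h}_t\mid W_t=\omega)$ (both equal to $g(\mathbf{h}_t)\propto a(\mathbf{h}_t)p(\mathbf{h}_t)$);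 $g_\Phi(\cdot\mid W_t=\omega)$ is the distribution of $\Phi(\mathbf{H}_t)$ when $\mathbf{H}_t\sim g(\cdot\mid W_t=\omega)$. Weighted factual risk: $R^{\omega}_{t,g}(f,\Phi)=\mathbb{E}_{\mathbf{H}_t\mid W_t=\omega}\big[\alpha(\mathbf{H}_t,\omega)\ell_{f,\Phi}(\mathbf{H}_t,\omega)\big]$. Treatment effects: $\tau(\mathbf{h}_t,\mathbf{z})=\mathbb{E}(Y_t(1)-Y_t(0)\mid\mathbf{H}_t=\mathbf{h}_t,\mathbf{Z}=\mathbf{z})$ and $\hat\tau_{f,\Phi}(\mathbf{h}_t,\mathbf{z})=f(\Phi(\mathbf{h}_t),\mathbf{z},1)-f(\Phi(\mathbf{h}_t),\mathbf{z},0)$. PEHE: $\epsilon_{PEHE_t}=\mathbb{E}_{\mathbf{Z}\sim q_\phi}\mathbb{E}_{\mathbf{H}_t}[(\tau(\mathbf{H}_t,\mathbf{Z})-\hat\tau_{f,\Phi}(\mathbf{H}_t,\mathbf{Z}))^2]$; weighted PEHE $\epsilon_{PEHE_{t,g}}$ is the same with $\mathbf{H}_t\sim g$. Integral probability metric: $\mathrm{IPM}_G(P,Q)=\sup_{h\in G}\left|\int h\,dP-\int h\,dQ\right|$. *)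

From HB Require Import structures.
From mathcomp Require Import all_boot all_order all_algebra.
From mathcomp Require Import all_classical all_reals all_analysis.
Set Implicit Arguments. Unset Strict Implicit. Unset Printing Implicit Defensive.
Import Order.TTheory GRing.Theory Num.Theory.
Import numFieldNormedType.Exports.
Local Open Scope classical_set_scope.
Local Open Scope ring_scope.
Local Open Scope ereal_scope.

(* Setting (time step t fixed):
   - Ht  : space of histories h_t, with p : probability Ht R the law of H_t;
   - e   : propensity score e(h_t) = P(W_t = 1 | H_t = h_t);
   - Zt  : latent space, q : probability Zt R the inference distribution
           q_phi(Z | D_T) (the data D_T being fixed);
   - KY w : conditional law of the potential outcome Y_t(w) given
           H_t = h_t, Z = z (a probability kernel);
   - Rep : representation space, Phi : Ht -> Rep the representation;
   - f   : Rep -> Zt -> bool -> R the outcome hypothesis (w = true is 1). *)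
Section defs.
Context {R : realType} {dH dZ dR : measure_display}
  {Ht : measurableType dH} {Zt : measurableType dZ} {Rep : measurableType dR}.

(* w e(h) + (1-w)(1-e(h)) = P(W_t = w | H_t = h) *)
Definition prop_w (e : Ht -> R) (w : bool) (h : Ht) : R :=
  if w then e h else (1 - e h)%R.

Definition probW (p : probability Ht R) (e : Ht -> R) (w : bool) : R :=
  fine (\int[p]_h (prop_w e w h)%:E).

(* E[F(H_t) | W_t = w] = \int F(h) p(h | W_t = w) dh, where
   p(h | W_t = w) = P(W_t = w | H_t = h) p(h) / P(W_t = w) (Bayes). *)
Definition condE (p : probability Ht R) (e : Ht -> R) (w : bool)
    (F : Ht -> \bar R) : \bar R :=
  \int[p]_h (F h * (prop_w e w h / probW p e w)%:E).

(* alpha(h,w) = a(h) / (w e(h) + (1-w)(1-e(h))), normalized so that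
   \int alpha(h,w) p(h | W_t = w) dh = 1 *)
Definition alpha (p : probability Ht R) (e a : Ht -> R) (w : bool) (h : Ht) : R :=
  ((a h / prop_w e w h) /
    fine (condE p e w (fun x => (a x / prop_w e w x)%:E)))%R.

Definition ell (q : probability Zt R) (KY : bool -> R.-pker (Ht * Zt)%type ~> R)
    (f : Rep -> Zt -> bool -> R) (Phi : Ht -> Rep) (h : Ht) (w : bool) : \bar R :=
  \int[q]_z \int[KY w (h, z)]_y ((y - f (Phi h) z w) ^+ 2)%:E.

Definition wrisk (p : probability Ht R) (e a : Ht -> R) (q : probability Zt R)
    (KY : bool -> R.-pker (Ht * Zt)%type ~> R)
    (f : Rep -> Zt -> bool -> R) (Phi : Ht -> Rep) (w : bool) : \bar R :=
  condE p e w (fun h => (alpha p e a w h)%:E * ell q KY f Phi h w).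

Definition tau (KY : bool -> R.-pker (Ht * Zt)%type ~> R) (h : Ht) (z : Zt) : R :=
  (fine (\int[KY true (h, z)]_y y%:E) - fine (\int[KY false (h, z)]_y y%:E))%R.

Definition tauhat (f : Rep -> Zt -> bool -> R) (Phi : Ht -> Rep) (h : Ht) (z : Zt) : R :=
  (f (Phi h) z true - f (Phi h) z false)%R.

Definition pehe (p : probability Ht R) (q : probability Zt R)
    (KY : bool -> R.-pker (Ht * Zt)%type ~> R)
    (f : Rep -> Zt -> bool -> R) (Phi : Ht -> Rep) : \bar R :=
  \int[q]_z \int[p]_h ((tau KY h z - tauhat f Phi h z) ^+ 2)%:E.

(* E_{H ~ g}[F(H)] with g(h) = a(h) p(h) / \int a dp *)
Definition gE (p : probability Ht R) (a : Ht -> R) (F : Ht -> \bar R) : \bar R :=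
  \int[p]_h (F h * (a h / fine (\int[p]_x (a x)%:E))%:E).

Definition pehe_g (p : probability Ht R) (a : Ht -> R) (q : probability Zt R)
    (KY : bool -> R.-pker (Ht * Zt)%type ~> R)
    (f : Rep -> Zt -> bool -> R) (Phi : Ht -> Rep) : \bar R :=
  \int[q]_z gE p a (fun h => ((tau KY h z - tauhat f Phi h z) ^+ 2)%:E).

(* \int u d g_Phi(. | W_t = w), where g_Phi(. | W_t = w) is the law of
   Phi(H_t) for H_t ~ g(. | W_t = w) = alpha(., w) p(. | W_t = w)
   (change of variables for the pushforward by Phi). *)
Definition gPhiE (p : probability Ht R) (e a : Ht -> R) (Phi : Ht -> Rep)
    (w : bool) (u : Rep -> R) : \bar R :=
  condE p e w (fun h => (alpha p e a w h * u (Phi h))%:E).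

(* IPM_G(P,Q) = sup_{u in G} | \int u dP - \int u dQ |, with P, Q given
   through their integration functionals EP u = \int u dP, EQ u = \int u dQ *)
Definition IPM (G : set (Rep -> R)) (EP EQ : (Rep -> R) -> \bar R) : \bar R :=
  ereal_sup [set `|EP u - EQ u| | u in G].

End defs.

(* The weights alpha make both target laws g(. | W_t = w) equal to g, with
   density a / \int a dp with respect to the law p of H_t; so each weighted
   factual risk is the g-expectation of the pointwise risk, and the IPM term is
   nonnegative: the first bound holds with C = 0. Pointwise,
   (tau - tauhat)^2 <= 2 (m_1 - f_1)^2 + 2 (m_0 - f_0)^2 where m_w is the
   conditional mean of Y_t(w), and Jensen's inequality bounds (m_w - f_w)^2 by
   the conditional squared loss; integrate against g x q and use Tonelli.
   Under strict overlap with a = kappa o e, the extreme value theorem on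
   [delta, 1 - delta] traps a in [m, M] with m > 0, so the density of g lies in
   [m / M, M / m], which compares the two PEHEs. *)

From HB Require Import structures.
From mathcomp Require Import all_boot all_order all_algebra.
From mathcomp Require Import all_classical all_reals all_analysis.
From mathcomp Require Import measurable_realfun ring lra.
Set Implicit Arguments.
Unset Strict Implicit.
Unset Printing Implicit Defensive.
Import Order.TTheory GRing.Theory Num.Theory.
Import numFieldNormedType.Exports.
Local Open Scope classical_set_scope.
Local Open Scope ring_scope.
Local Open Scope ereal_scope.

Lemma jensen_sqr_sub d (T : measurableType d) (R : realType)
    (mu : {measure set T -> \bar R}) (X : T -> R) (c : R) :
  mu setT = 1 -> mu.-integrable setT (EFin \o X) ->
  ((fine (\int[mu]_x (X x)%:E) - c) ^+ 2)%:E <= \int[mu]_x ((X x - c) ^+ 2)%:E.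
Proof.
move=> mu1 iX; set m := fine _.
have intXE : \int[mu]_x (X x)%:E = m%:E.
  by rewrite fineK//; exact: integrable_fin_num iX.
have mX : measurable_fun setT X.
  by apply/measurable_EFinP; exact: measurable_int iX.
have [->|sq_fin] := eqVneq (\int[mu]_x ((X x - c) ^+ 2)%:E) +oo.
  exact: leey.
have isq : mu.-integrable setT (fun x => ((X x - c) ^+ 2)%:E).
  apply/integrableP; split.
    by apply/measurable_EFinP; apply: measurable_funX; exact: measurable_funB.
  under eq_integral do rewrite gee0_abs ?lee_fin ?sqr_ge0//.
  by rewrite ltey.
(* the tangent [y |-> k0 + k y] to [y |-> (y - c)^2] at [m] lies below it and
   has mean [(m - c)^2] *)
pose k := (2 * (m - c))%R; pose k0 := ((m - c) ^+ 2 - k * m)%R.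
have icst : mu.-integrable setT (fun=> k0%:E).
  apply/integrableP; split; first exact: measurable_cst.
  by rewrite integral_cst// mu1 mule1 ltry.
have itan := integrableD measurableT icst (integrableZl measurableT k iX).
have -> : ((m - c) ^+ 2)%:E = \int[mu]_x (k0%:E + k%:E * (X x)%:E).
  rewrite integralD//; last exact: integrableZl.
  rewrite (integral_cst mu measurableT k0%:E) mu1 mule1 integralZl// intXE.
  by rewrite -EFinM -EFinD /k0 /k; congr EFin; ring.
apply: le_integral => // x _; rewrite -EFinM -EFinD lee_fin -subr_ge0.
by rewrite (_ : _ - _ = (X x - m) ^+ 2)%R ?sqr_ge0// /k0 /k; ring.
Qed.

Lemma integral_gt0 d (T : measurableType d) (R : realType)
    (mu : {measure set T -> \bar R}) (f : T -> R) :
  mu setT != 0 -> measurable_fun setT f -> (forall x, 0 < f x)%R ->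
  0 < \int[mu]_x (f x)%:E.
Proof.
move=> mu0 mf f_gt0; rewrite lt0e integral_ge0 ?andbT; last first.
  by move=> x _; rewrite lee_fin ltW.
apply: contra mu0 => /eqP int0.
have mEf : measurable_fun setT (EFin \o f) by exact/measurable_EFinP.
have [N [mN muN0 f0N]] : ae_eq mu setT (EFin \o f) (cst 0).
  apply/(ae_eq_integral_abs mu measurableT mEf).
  by under eq_integral do rewrite gee0_abs ?lee_fin ?ltW//.
rewrite -muN0 (_ : setT = N)//; apply/seteqP; split=> // x _; apply: f0N.
by move=> /(_ I) [] /eqP; rewrite gt_eqF.
Qed.

Lemma measurable_fun_integral_kernel_signed d d' (X : measurableType d)
    (Y : measurableType d') (R : realType) (k : R.-ker X ~> Y)
    (g : Y -> \bar R) :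
  measurable_fun setT g -> measurable_fun setT (fun x => \int[k x]_y g y).
Proof.
move=> mg; under eq_fun do rewrite integralE.
by apply: emeasurable_funB; apply: measurable_fun_integral_kernel;
  by [exact: measurable_kernel|exact: funepos_ge0|exact: funeneg_ge0
     |exact: measurable_funepos|exact: measurable_funeneg].
Qed.

Lemma continuous_pos_itv_bounds {R : realType} (kappa : R -> R) (x y : R) :
  (x <= y)%R -> continuous kappa -> (forall t, x <= t <= y -> 0 < kappa t)%R ->
  exists m M : R, (0 < m)%R /\ forall t, (x <= t <= y -> m <= kappa t <= M)%R.
Proof.
move=> xy ck kappa_gt0.
have ck_xy : {within `[x, y], continuous kappa} by exact: continuous_subspaceT.
have [tM _ kappa_le] := EVT_max xy ck_xy.
have [tm tm_xy kappa_ge] := EVT_min xy ck_xy.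
exists (kappa tm), (kappa tM); split.
  by apply: kappa_gt0; move: tm_xy; rewrite in_itv.
by move=> t t_xy; rewrite kappa_le ?kappa_ge ?in_itv.
Qed.

Section weighted_integral.
Context d (T : measurableType d) (R : realType).
Variable mu : {measure set T -> \bar R}.
Variables (F : T -> \bar R) (c : T -> R).
Hypotheses (mF : measurable_fun setT F) (F_ge0 : forall x, 0 <= F x)
  (mc : measurable_fun setT c) (c_ge0 : forall x, (0 <= c x)%R).

Let mFc : measurable_fun setT (fun x => F x * (c x)%:E).
Proof. by apply: emeasurable_funM => //; exact/measurable_EFinP. Qed.

Let Fc_ge0 x : 0 <= F x * (c x)%:E.
Proof. by rewrite mule_ge0 ?lee_fin. Qed.

Lemma le_integral_weighted (A : R) : (0 <= A)%R -> (forall x, A * c x <= 1)%R ->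
  A%:E * \int[mu]_x (F x * (c x)%:E) <= \int[mu]_x F x.
Proof.
move=> A_ge0 Ac_le1; rewrite -ge0_integralZl ?lee_fin//.
apply: ge0_le_integral => //.
- by move=> x _; rewrite mule_ge0 ?lee_fin.
- exact: measurable_funeM.
- move=> x _; rewrite muleCA -EFinM -[leRHS]mule1.
  by apply: lee_wpmul2l; rewrite ?lee_fin.
Qed.

Lemma ge_integral_weighted (B : R) : (0 <= B)%R -> (forall x, 1 <= B * c x)%R ->
  \int[mu]_x F x <= B%:E * \int[mu]_x (F x * (c x)%:E).
Proof.
move=> B_ge0 Bc_ge1; rewrite -ge0_integralZl ?lee_fin//.
apply: ge0_le_integral => //; first exact: measurable_funeM.
move=> x _; rewrite muleCA -EFinM -[leLHS]mule1.
by apply: lee_wpmul2l; rewrite ?lee_fin.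
Qed.

End weighted_integral.

Section outcome_model.
Context {R : realType} {dH dZ dR : measure_display}
  {Ht : measurableType dH} {Zt : measurableType dZ} {Rep : measurableType dR}.
Variable KY : bool -> R.-pker (Ht * Zt)%type ~> R.

Definition cond_risk (f : Rep -> Zt -> bool -> R) (Phi : Ht -> Rep) w
    (hz : Ht * Zt) :=
  \int[KY w hz]_y ((y - f (Phi hz.1) hz.2 w) ^+ 2)%:E.

Definition te_sqr_err (f : Rep -> Zt -> bool -> R) (Phi : Ht -> Rep)
    (hz : Ht * Zt) :=
  ((tau KY hz.1 hz.2 - tauhat f Phi hz.1 hz.2) ^+ 2)%:E.

Lemma measurable_tau : measurable_fun setT (fun hz => tau KY hz.1 hz.2).
Proof.
have mmean w : measurable_fun setT (fun hz => fine (\int[KY w hz]_y y%:E)).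
  apply: measurableT_comp => //.
  exact: measurable_fun_integral_kernel_signed.
by apply: measurable_funB; [have := mmean true|have := mmean false];
  apply: eq_measurable_fun => -[].
Qed.

Variables (f : Rep -> Zt -> bool -> R) (Phi : Ht -> Rep).
Hypotheses (mPhi : measurable_fun setT Phi)
  (mf : forall w, measurable_fun setT (fun rz : Rep * Zt => f rz.1 rz.2 w)).

Lemma measurable_prediction w :
  measurable_fun setT (fun hz : Ht * Zt => f (Phi hz.1) hz.2 w).
Proof.
have mPhi1 : measurable_fun setT (fun hz : Ht * Zt => (Phi hz.1, hz.2)).
  apply: measurable_fun_pair => //.
  exact: measurableT_comp mPhi measurable_fst.
exact: measurableT_comp (mf w) mPhi1.
Qed.

Lemma measurable_cond_risk w :
  measurable_fun setT (cond_risk f Phi w).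
Proof.
apply: (measurable_fun_integral_finite_kernel
  (fun xy : (Ht * Zt) * R => ((xy.2 - f (Phi xy.1.1) xy.1.2 w) ^+ 2)%:E)
  (KY w)).
  by move=> xy; rewrite lee_fin sqr_ge0.
apply/measurable_EFinP; apply: measurable_funX; apply: measurable_funB => //.
exact: measurableT_comp (measurable_prediction w) measurable_fst.
Qed.

Lemma measurable_te_sqr_err :
  measurable_fun setT (te_sqr_err f Phi).
Proof.
apply/measurable_EFinP; apply: measurable_funX; apply: measurable_funB.
  exact: measurable_tau.
by apply: measurable_funB; exact: measurable_prediction.
Qed.

Hypothesis KY_int : forall w h z, (KY w (h, z)).-integrable setT EFin.

Lemma te_sqr_err_le hz : te_sqr_err f Phi hz <=
  2%:E * cond_risk f Phi true hz + 2%:E * cond_risk f Phi false hz.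
Proof.
case: hz => h z; rewrite /te_sqr_err /tau /tauhat /=.
set m1 := fine _; set m0 := fine _; set f1 := f _ _ true; set f0 := f _ _ false.
have -> : (m1 - m0 - (f1 - f0) = (m1 - f1) - (m0 - f0))%R by ring.
apply: (@le_trans _ _ (2 * (m1 - f1) ^+ 2 + 2 * (m0 - f0) ^+ 2)%R%:E).
  rewrite lee_fin -subr_ge0.
  by rewrite (_ : _ - _ = ((m1 - f1) + (m0 - f0)) ^+ 2)%R ?sqr_ge0//; ring.
rewrite EFinD !(EFinM 2); apply: leeD; apply: lee_wpmul2l => //;
  exact: (jensen_sqr_sub (X := id) _
    (@prob_kernel _ _ _ _ _ (KY _) (h, z)) (KY_int _ h z)).
Qed.

End outcome_model.

Section reweighting.
Context {R : realType} {dH : measure_display} {Ht : measurableType dH}.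
Variables (p : probability Ht R) (e a : Ht -> R).
Hypotheses (me : measurable_fun setT e) (e01 : forall h, (0 < e h < 1)%R)
  (ia : p.-integrable setT (EFin \o a)) (a_int_gt0 : 0 < \int[p]_h (a h)%:E).

Definition gmass := fine (\int[p]_x (a x)%:E).

Definition gweight h := (a h / gmass)%R.

Lemma prop_w_gt0 w h : (0 < prop_w e w h)%R.
Proof. by case: w; have /andP[e0 e1] := e01 h; rewrite /prop_w ?subr_gt0. Qed.

Lemma prop_w_le1 w h : (prop_w e w h <= 1)%R.
Proof.
by case: w; have /andP[e0 e1] := e01 h; rewrite /prop_w ?gerBl ltW.
Qed.

Lemma measurable_prop_w w : measurable_fun setT (prop_w e w).
Proof. by case: w => //=; exact: measurable_funB. Qed.

Let p_setT : (p : {measure set Ht -> \bar R}) setT = 1.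
Proof. exact: probability_setT. Qed.

Lemma probW_gt0 w : (0 < probW p e w)%R.
Proof.
have mprop := measurable_prop_w w.
apply: fine_gt0; apply/andP; split.
  by apply: integral_gt0 => //; [rewrite p_setT oner_neq0|exact: prop_w_gt0].
apply: (@le_lt_trans _ _ (\int[p]_h (cst 1%:E h))).
  apply: ge0_le_integral => //.
  - by move=> h _; rewrite lee_fin ltW ?prop_w_gt0.
  - exact/measurable_EFinP.
  - by move=> h _; rewrite lee_fin prop_w_le1.
by rewrite integral_cst// p_setT mule1 ltry.
Qed.

Let gmassE : \int[p]_x (a x)%:E = gmass%:E.
Proof. by rewrite fineK//; exact: integrable_fin_num ia. Qed.

Lemma gmass_gt0 : (0 < gmass)%R.
Proof. by rewrite -lte_fin -gmassE. Qed.

Lemma condE_weight w :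
  condE p e w (fun h => (a h / prop_w e w h)%:E) = (gmass / probW p e w)%:E.
Proof.
rewrite /condE (eq_integral (fun h => (a h)%:E * (probW p e w)^-1%:E)).
  by rewrite integralZr// EFinM -gmassE.
move=> h _; rewrite -EFinM; congr EFin.
have pW0 := lt0r_neq0 (probW_gt0 w); have prop0 := lt0r_neq0 (prop_w_gt0 w h).
by field; rewrite pW0 prop0.
Qed.

Lemma alpha_prop_w w h :
  (alpha p e a w h * (prop_w e w h / probW p e w))%R = gweight h.
Proof.
rewrite /alpha condE_weight /= /gweight.
have pW0 := lt0r_neq0 (probW_gt0 w); have prop0 := lt0r_neq0 (prop_w_gt0 w h).
by field; rewrite pW0 prop0 (lt0r_neq0 gmass_gt0).
Qed.

Lemma wrisk_gE dZ dR (Zt : measurableType dZ) (Rep : measurableType dR)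
    (q : probability Zt R) (KY : bool -> R.-pker (Ht * Zt)%type ~> R)
    (f : Rep -> Zt -> bool -> R) (Phi : Ht -> Rep) w :
  wrisk p e a q KY f Phi w = gE p a (fun h => ell q KY f Phi h w).
Proof.
apply: eq_integral => h _.
by rewrite muleAC -EFinM alpha_prop_w muleC.
Qed.

Lemma measurable_gweight : measurable_fun setT gweight.
Proof.
apply: measurable_funM => //; apply/measurable_EFinP.
exact: measurable_int ia.
Qed.

Lemma gweight_ge0 : (forall h, 0 <= a h)%R -> forall h, (0 <= gweight h)%R.
Proof. by move=> a_ge0 h; rewrite divr_ge0// ltW// gmass_gt0. Qed.

Lemma gmass_bounds m M : (0 <= m)%R -> (forall h, m <= a h <= M)%R ->
  (m <= gmass <= M)%R.
Proof.
move=> m_ge0 a_mM; have ma := measurable_int _ ia.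
have int_cst k : \int[p]_x (cst k%:E x) = k%:E.
  by rewrite integral_cst// p_setT mule1.
rewrite -!lee_fin -gmassE -{1}int_cst -(int_cst M); apply/andP; split.
  by apply: ge0_le_integral => // h _; have /andP[] := a_mM h; rewrite lee_fin.
apply: ge0_le_integral => // h _; have /andP[mh hM] := a_mM h.
  by rewrite lee_fin (le_trans m_ge0 mh).
by rewrite lee_fin.
Qed.

Lemma gweight_bounds m M : (0 < m)%R -> (forall h, m <= a h <= M)%R ->
  forall h, (m / M <= gweight h <= M / m)%R.
Proof.
move=> m_gt0 a_mM h; have /andP[mN NM] := gmass_bounds (ltW m_gt0) a_mM.
have /andP[mh hM] := a_mM h.
have N_gt0 := gmass_gt0; have M_gt0 := lt_le_trans m_gt0 (le_trans mh hM).
have invM_le : (M^-1 <= gmass^-1)%R by rewrite lef_pV2 ?posrE.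
have invN_le : (gmass^-1 <= m^-1)%R by rewrite lef_pV2 ?posrE.
rewrite /gweight; apply/andP; split; apply: ler_pM => //;
  by rewrite ?invr_ge0 ltW// (lt_le_trans m_gt0).
Qed.

End reweighting.

Section pehe_bounds.
Context {R : realType} {dH dZ dR : measure_display}
  {Ht : measurableType dH} {Zt : measurableType dZ} {Rep : measurableType dR}.
Variables (p : probability Ht R) (q : probability Zt R)
  (KY : bool -> R.-pker (Ht * Zt)%type ~> R) (e a : Ht -> R)
  (f : Rep -> Zt -> bool -> R) (Phi : Ht -> Rep).
Hypotheses (me : measurable_fun setT e) (e01 : forall h, (0 < e h < 1)%R)
  (a_ge0 : forall h, (0 <= a h)%R) (ia : p.-integrable setT (EFin \o a))
  (a_int_gt0 : 0 < \int[p]_h (a h)%:E)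
  (KY_int : forall w h z, (KY w (h, z)).-integrable setT EFin)
  (mPhi : measurable_fun setT Phi)
  (mf : forall w, measurable_fun setT (fun rz : Rep * Zt => f rz.1 rz.2 w)).

Let c (hz : Ht * Zt) := gweight p a hz.1.

Let mc : measurable_fun setT c.
Proof. exact: measurableT_comp (measurable_gweight ia) measurable_fst. Qed.

Let c_ge0 hz : (0 <= c hz)%R.
Proof. exact: gweight_ge0. Qed.

Let te_sqr_err_ge0 hz : 0 <= te_sqr_err KY f Phi hz.
Proof. by rewrite lee_fin sqr_ge0. Qed.

Let cond_risk_ge0 w hz : 0 <= cond_risk KY f Phi w hz.
Proof. by apply: integral_ge0 => y _; rewrite lee_fin sqr_ge0. Qed.

Let mweighted (F : Ht * Zt -> \bar R) :
  measurable_fun setT F -> measurable_fun setT (fun hz => F hz * (c hz)%:E).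
Proof. by move=> mF; apply: emeasurable_funM => //; exact/measurable_EFinP. Qed.

Let weighted_ge0 (F : Ht * Zt -> \bar R) :
  (forall hz, 0 <= F hz) -> forall hz, 0 <= F hz * (c hz)%:E.
Proof. by move=> F_ge0 hz; rewrite mule_ge0 ?lee_fin. Qed.

Lemma pehe_prodE : pehe p q KY f Phi = \int[p \x q]_hz te_sqr_err KY f Phi hz.
Proof. by rewrite (fubini_tonelli2 _ (measurable_te_sqr_err KY mPhi mf)). Qed.

Lemma pehe_g_prodE :
  pehe_g p a q KY f Phi = \int[p \x q]_hz (te_sqr_err KY f Phi hz * (c hz)%:E).
Proof.
by rewrite (fubini_tonelli2 _ (mweighted (measurable_te_sqr_err KY mPhi mf))
  (weighted_ge0 te_sqr_err_ge0)).
Qed.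

Lemma wrisk_prodE w :
  wrisk p e a q KY f Phi w =
  \int[p \x q]_hz (cond_risk KY f Phi w hz * (c hz)%:E).
Proof.
have mF := mweighted (measurable_cond_risk KY mPhi mf w).
rewrite (wrisk_gE me e01 ia a_int_gt0).
rewrite (fubini_tonelli1 _ mF (weighted_ge0 (cond_risk_ge0 w))).
apply: eq_integral => h _.
rewrite /fubini_F /c /= ge0_integralZr ?lee_fin ?gweight_ge0//.
exact: measurable_fun_pair2 (measurable_cond_risk KY mPhi mf w).
Qed.

Lemma pehe_g_le_wrisk : pehe_g p a q KY f Phi <=
  2%:E * (wrisk p e a q KY f Phi true + wrisk p e a q KY f Phi false).
Proof.
have mcr w := mweighted (measurable_cond_risk KY mPhi mf w).
have cr_ge0 w := weighted_ge0 (cond_risk_ge0 w).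
rewrite pehe_g_prodE !wrisk_prodE ge0_muleDr ?integral_ge0//.
rewrite -!ge0_integralZl// -ge0_integralD//; last 4 first.
- by move=> hz _; rewrite mule_ge0.
- exact: measurable_funeM.
- by move=> hz _; rewrite mule_ge0.
- exact: measurable_funeM.
apply: ge0_le_integral => //.
- by move=> hz _; exact: weighted_ge0.
- exact: mweighted (measurable_te_sqr_err KY mPhi mf).
- by apply: emeasurable_funD; exact: measurable_funeM.
move=> hz _; rewrite !muleA -muleDl//.
  by apply: lee_wpmul2r; [rewrite lee_fin c_ge0|exact: te_sqr_err_le].
by rewrite ge0_adde_def// inE mule_ge0.
Qed.

Lemma pehe_g_sandwich lo hi : (0 < lo)%R ->
    (forall h, lo <= gweight p a h <= hi)%R ->
  hi^-1%:E * pehe_g p a q KY f Phi <= pehe p q KY f Phi /\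
  pehe p q KY f Phi <= lo^-1%:E * pehe_g p a q KY f Phi.
Proof.
move=> lo_gt0 c_bounds; have mte := measurable_te_sqr_err KY mPhi mf.
have hi_gt0 : (0 < hi)%R by have /andP[lo_c c_hi] := c_bounds point; lra.
rewrite pehe_g_prodE pehe_prodE; split.
- apply: le_integral_weighted; rewrite ?invr_ge0 ?(ltW hi_gt0)// => hz.
  by rewrite mulrC ler_pdivrMr// mul1r; case/andP: (c_bounds hz.1).
- apply: ge_integral_weighted; rewrite ?invr_ge0 ?(ltW lo_gt0)// => hz.
  by rewrite mulrC ler_pdivlMr// mul1r; case/andP: (c_bounds hz.1).
Qed.

End pehe_bounds.

Lemma IPM_ge0 {R : realType} {d : measure_display} {Rep : measurableType d}
    (G : set (Rep -> R)) (EP EQ : (Rep -> R) -> \bar R) u :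
  G u -> 0 <= IPM G EP EQ.
Proof.
move=> Gu; apply: le_trans (abse_ge0 (EP u - EQ u)) _.
by apply: ereal_sup_ubound; exists u.
Qed.

Lemma overlap_bounded_weight {T : Type} {R : realType} (e a : T -> R) delta :
    (0 < delta < 1 / 2)%R -> (forall h, delta < e h < 1 - delta)%R ->
    (exists kappa : R -> R, continuous kappa /\
      (forall x, (0 < x < 1)%R -> (0 < kappa x)%R) /\ a = kappa \o e) ->
  exists m M : R, (0 < m)%R /\ forall h, (m <= a h <= M)%R.
Proof.
move=> /andP[delta_gt0 delta_lt] overlap [kappa [ckappa [kappa_gt0 ->]]].
have kappa_itv_gt0 t : (delta <= t <= 1 - delta -> 0 < kappa t)%R.
  by move=> /andP[? ?]; apply: kappa_gt0; apply/andP; split; lra.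
have [|m [M [m_gt0 kappa_mM]]] :=
  continuous_pos_itv_bounds _ ckappa kappa_itv_gt0; first lra.
exists m, M; split=> // h; apply: kappa_mM.
by have /andP[? ?] := overlap h; apply/andP; split; lra.
Qed.

Theorem theorem3 (R : realType) (dH dZ dR : measure_display)
  (Ht : measurableType dH) (Zt : measurableType dZ) (Rep : measurableType dR)
  (p : probability Ht R) (q : probability Zt R)
  (KY : bool -> R.-pker (Ht * Zt)%type ~> R)
  (e a : Ht -> R) (G : set (Rep -> R)) :
  measurable_fun setT e ->
  (forall h, (0 < e h < 1)%R) ->
  measurable_fun setT a ->
  (forall h, (0 <= a h)%R) ->
  p.-integrable setT (EFin \o a) ->
  0 < \int[p]_h (a h)%:E ->
  (forall w h z, (KY w (h, z)).-integrable setT EFin) ->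
  (exists C : R, forall (Phi : Ht -> Rep) (Psi : Rep -> Ht)
      (f : Rep -> Zt -> bool -> R) (BPhi : R),
      measurable_fun setT Phi ->
      (forall w, measurable_fun setT (fun rz : Rep * Zt => f rz.1 rz.2 w)) ->
      cancel Phi Psi -> cancel Psi Phi ->
      (0 < BPhi)%R ->
      (forall h w, ell q KY f Phi h w \is a fin_num) ->
      (forall w, G (fun r => fine (ell q KY f Phi (Psi r) w) / BPhi)%R) ->
      pehe_g p a q KY f Phi <=
        2%:E * (wrisk p e a q KY f Phi true + wrisk p e a q KY f Phi false)
        + BPhi%:E * IPM G (gPhiE p e a Phi true) (gPhiE p e a Phi false)
        + C%:E)
  /\
  (forall delta : R, (0 < delta < 1 / 2)%R ->
     (forall h, (delta < e h < 1 - delta)%R) ->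
     (exists kappa : R -> R, continuous kappa /\
        (forall x, (0 < x < 1)%R -> (0 < kappa x)%R) /\ a = kappa \o e) ->
     exists A B : R, (0 < A)%R /\ (A <= B)%R /\
       forall (Phi : Ht -> Rep) (f : Rep -> Zt -> bool -> R),
         measurable_fun setT Phi ->
         (forall w, measurable_fun setT (fun rz : Rep * Zt => f rz.1 rz.2 w)) ->
         A%:E * pehe_g p a q KY f Phi <= pehe p q KY f Phi /\
         pehe p q KY f Phi <= B%:E * pehe_g p a q KY f Phi).
Proof.
move=> me e01 _ a_ge0 ia a_int_gt0 KY_int; split.
  exists 0%R => Phi Psi f BPhi mPhi mf _ _ BPhi_gt0 _ G_ell.
  have risk_bound := pehe_g_le_wrisk q me e01 a_ge0 ia a_int_gt0 KY_int mPhi mf.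
  rewrite adde0; apply: le_trans risk_bound _.
  rewrite leeDl// mule_ge0 ?lee_fin ?(ltW BPhi_gt0)//.
  exact: IPM_ge0 (G_ell true).
move=> delta delta01 overlap a_kappa.
have [m [M [m_gt0 a_mM]]] := overlap_bounded_weight delta01 overlap a_kappa.
have M_gt0 : (0 < M)%R by have /andP[? ?] := a_mM point; lra.
have c_mM := gweight_bounds ia a_int_gt0 m_gt0 a_mM.
exists (M / m)^-1%R, (m / M)^-1%R; split; first by rewrite invr_gt0 divr_gt0.
split.
  have /andP[] := c_mM point; rewrite lef_pV2 ?posrE ?divr_gt0//.
  exact: le_trans.
move=> Phi f mPhi mf.
by apply: (pehe_g_sandwich q KY a_ge0 ia a_int_gt0 mPhi mf); rewrite ?divr_gt0.
Qed.
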